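(* Let $t>0$ be fixed and $x_1,x_2>0$ with $x_1\ne x_2$. Then the characteristic triangles $\Delta(x_1,t)$ and $\Delta(x_2,t)$ do not intersect in the open quadrant $(0,\infty)^2$.
   Context: Standing assumptions: $u_0,u_b:[0,\infty)\to\mathbb{R}$ bounded measurable with $u_b>0$; $\rho_0,\rho_b:[0,\infty)\to(0,\infty)$ positive locally bounded measurable. For $x,t,y,\tau\ge0$: $F(y,x,t)=\int_0^y[tu_0(\eta)+\eta-x]\rho_0(\eta)\,d\eta$, $G(\tau,x,t)=\int_0^\tau[x-u_b(\eta)(t-\eta)]\rho_b(\eta)u_b(\eta)\,d\eta$, $F(x,t)=\min_{y\ge0}F(y,x,t)$, $G(x,t)=\min_{\tau\ge0}G(\tau,x,t)$ (minima attained); $y_*\le y^*$ smallest/largest minimizers of $F(\cdot,x,t)$, $\tau_*\le\tau^*$ those of $G(\cdot,x,t)$. Characteristic triangle $\Delta(x,t)$ ($x\ge0,t>0$): (1) if $x>0$, $F(x,t)<G(x,t)$: convex hull of $(x,t),(y_*(x,t),0),(y^*(x,t),0)$; (2) if $F(x,t)>G(x,t)$: convex hull of $(x,t),(0,\tau_*(x,t)),(0,\tau^*(x,t))$; (3) if $F(x,t)=G(x,t)$: convex hull of $(x,t),(y^*(x,t),0),(0,\tau^*(x,t)),(0,0)$; (4) if $x=0$, $F(0,t)<G(0,t)$: convex hull of $(0,t),(0,0),(y^*(0,t),0)$. *)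

From HB Require Import structures.
From mathcomp Require Import all_boot all_order all_algebra.
From mathcomp Require Import all_classical all_reals all_analysis.
Set Implicit Arguments.
Unset Strict Implicit.
Unset Printing Implicit Defensive.
Import Order.TTheory GRing.Theory Num.Theory.
Import numFieldNormedType.Exports.
Local Open Scope classical_set_scope.
Local Open Scope ring_scope.

Section Defs.
Variable R : realType.
Variables (u0 ub rho0 rhob : R -> R).

Definition Fyxt (y x t : R) : R :=
  \int[@lebesgue_measure R]_(eta in `[0, y]) ((t * u0 eta + eta - x) * rho0 eta).

Definition Gtxt (tau x t : R) : R :=
  \int[@lebesgue_measure R]_(eta in `[0, tau]) ((x - ub eta * (t - eta)) * rhob eta * ub eta).

Definition Fmin (x t : R) : R := inf [set Fyxt y x t | y in `[0, +oo[].
Definition Gmin (x t : R) : R := inf [set Gtxt tau x t | tau in `[0, +oo[].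

Definition argminF (x t : R) : set R := [set y | 0 <= y /\ Fyxt y x t = Fmin x t].
Definition argminG (x t : R) : set R := [set tau | 0 <= tau /\ Gtxt tau x t = Gmin x t].

Definition y_low (x t : R) : R := inf (argminF x t).
Definition y_up (x t : R) : R := sup (argminF x t).
Definition tau_low (x t : R) : R := inf (argminG x t).
Definition tau_up (x t : R) : R := sup (argminG x t).

Definition conv3 (a b c : R * R) : set (R * R) :=
  [set p | exists l1 l2 l3 : R, [/\ 0 <= l1, 0 <= l2, 0 <= l3, l1 + l2 + l3 = 1 &
     p = (l1 * a.1 + l2 * b.1 + l3 * c.1, l1 * a.2 + l2 * b.2 + l3 * c.2)]].

Definition conv4 (a b c e : R * R) : set (R * R) :=
  [set p | exists l1 l2 l3 l4 : R,
     [/\ 0 <= l1, 0 <= l2, 0 <= l3, 0 <= l4 & l1 + l2 + l3 + l4 = 1] /\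
     p = (l1 * a.1 + l2 * b.1 + l3 * c.1 + l4 * e.1,
          l1 * a.2 + l2 * b.2 + l3 * c.2 + l4 * e.2)].

Definition char_triangle (x t : R) : set (R * R) :=
  if (0 < x) && (Fmin x t < Gmin x t) then
    conv3 (x, t) (y_low x t, 0) (y_up x t, 0)
  else if Gmin x t < Fmin x t then
    conv3 (x, t) (0, tau_low x t) (0, tau_up x t)
  else if Fmin x t == Gmin x t then
    conv4 (x, t) (y_up x t, 0) (0, tau_up x t) (0, 0)
  else (* x = 0 and F(0,t) < G(0,t) *)
    conv3 (0, t) (0, 0) (y_up 0 t, 0).

End Defs.

Definition has_extreme_minimizers (R : realType) (f : R -> R) : Prop :=
  exists ylo yhi : R, [/\ 0 <= ylo, 0 <= yhi,
    (forall y, 0 <= y -> f ylo <= f y), f yhi = f ylo &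
    (forall y, 0 <= y -> f y = f ylo -> ylo <= y /\ y <= yhi)].

Definition bounded_on_nonneg (R : realType) (f : R -> R) : Prop :=
  exists C : R, forall eta, 0 <= eta -> `|f eta| <= C.

Definition locally_bounded_on_nonneg (R : realType) (f : R -> R) : Prop :=
  forall M : R, exists C : R, forall eta, 0 <= eta -> eta <= M -> `|f eta| <= C.

From HB Require Import structures.
From mathcomp Require Import all_boot all_order all_algebra.
From mathcomp Require Import all_classical all_reals all_analysis.
From mathcomp Require Import measurable_realfun ring lra.

(* Moving x from x1 to x2 > x1 changes F(y, x, t) by -(x2 - x1) mass0 y and
   G(tau, x, t) by (x2 - x1) massb tau, where mass0 and massb, the primitives
   of rho0 and of rhob ub, are strictly increasing.  Hence the minimizers of
   F move right, those of G move down, F(x, t) decreases, G(x, t) increases,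
   and the minimizers of G stay below t.  With b = (x1 + x2) / 2, either
   Delta(x2, t) is of type (1) and the line through (y^*(x1, t), 0) and
   (b, t) separates the two triangles, or Delta(x1, t) is of type (2) and the
   line through (0, tau_*(x1, t)) and (b, t) separates them, or both are of
   type (3); then y^*(x1, t) = tau^*(x2, t) = 0 and the line through (0, 0)
   and (b, t) separates them.  Each separating line meets both triangles
   only on a coordinate axis. *)

Set Implicit Arguments.
Unset Strict Implicit.
Unset Printing Implicit Defensive.

Import Order.TTheory GRing.Theory Num.Theory.
Import numFieldNormedType.Exports.
Local Open Scope classical_set_scope.
Local Open Scope ring_scope.

Section LocallyBounded.
Context {R : realType}.
Implicit Types f g : R -> R.

Lemma locally_bounded_cst (c : R) : locally_bounded_on_nonneg (fun=> c).
Proof. by move=> M; exists `|c|. Qed.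

Lemma locally_bounded_id : locally_bounded_on_nonneg (@id R).
Proof.
move=> M; exists `|M| => e e0 eM; rewrite ger0_norm //.
exact: le_trans (ler_norm _).
Qed.

Lemma bounded_locally_bounded f :
  bounded_on_nonneg f -> locally_bounded_on_nonneg f.
Proof. by move=> [C hC] M; exists C => e e0 _; apply: hC. Qed.

Lemma locally_boundedD f g : locally_bounded_on_nonneg f ->
  locally_bounded_on_nonneg g -> locally_bounded_on_nonneg (f \+ g).
Proof.
move=> hf hg M; have [Cf {}hf] := hf M; have [Cg {}hg] := hg M.
exists (Cf + Cg) => e e0 eM.
by rewrite (le_trans (ler_normD _ _)) // lerD ?hf ?hg.
Qed.

Lemma locally_boundedN f :
  locally_bounded_on_nonneg f -> locally_bounded_on_nonneg (\- f).
Proof.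
by move=> hf M; have [C {}hf] := hf M; exists C => e e0 eM; rewrite normrN hf.
Qed.

Lemma locally_boundedM f g : locally_bounded_on_nonneg f ->
  locally_bounded_on_nonneg g -> locally_bounded_on_nonneg (f \* g).
Proof.
move=> hf hg M; have [Cf {}hf] := hf M; have [Cg {}hg] := hg M.
by exists (Cf * Cg) => e e0 eM; rewrite normrM ler_pM ?hf ?hg.
Qed.

End LocallyBounded.

Section PrimitiveOfPositive.
Context {R : realType}.
Notation mu := (@lebesgue_measure R).
Implicit Types (f : R -> R) (a b y : R).

Lemma integrable_itv0 f y : measurable_fun (`[0, +oo[ : set R) f ->
  locally_bounded_on_nonneg f -> mu.-integrable `[0, y] (EFin \o f).
Proof.
move=> mf bf; apply: measurable_bounded_integrable => //.
- by have /= -> := @lebesgue_measure_itv R `[0, y]; case: ifP; rewrite ltry.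
- by apply: measurable_funS mf => //; apply: subset_itvl; rewrite bnd_simp.
- have [C hC] := bf y; exists C; split; first by rewrite num_real.
  move=> M CM x; rewrite /= in_itv /= => /andP[x0 xy].
  by rewrite (le_trans (hC _ x0 xy)) // ltW.
Qed.

(* A nonnegative integrand with zero integral vanishes almost everywhere,
   and the interval ]a, b] is not negligible. *)
Lemma Rintegral_itv_gt0 f a b : a < b -> mu.-integrable `]a, b] (EFin \o f) ->
  (forall x, a < x -> x <= b -> 0 < f x) -> 0 < \int[mu]_(x in `]a, b]) f x.
Proof.
move=> ab fi f_gt0.
have f_ge0 x : x \in `]a, b] -> 0 <= f x.
  by rewrite /= in_itv /= => /andP[ax xb]; exact/ltW/f_gt0.
rewrite lt_neqAle Rintegral_ge0 // andbT; apply/eqP => int0.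
have int_f0 : (\int[mu]_(x in `]a, b]) (f x)%:E = 0)%E.
  have := congr1 EFin (esym int0); rewrite fineK //.
  exact: integrable_fin_num fi.
have abs0 : (\int[mu]_(x in `]a, b]) `|(f x)%:E| = 0)%E.
  rewrite -int_f0; apply: eq_integral => x; rewrite inE => /f_ge0 fx0.
  by rewrite /= ger0_norm.
have mab : measurable (`]a, b] : set R) by [].
have [N [mN N0 fN]] := (ae_eq_integral_abs mu mab (measurable_int _ fi)).1 abs0.
suff : (mu `]a, b] <= mu N)%E.
  have /= -> := @lebesgue_measure_itv R `]a, b].
  by rewrite N0 lte_fin ab -EFinD lee_fin subr_le0 leNgt ab.
apply: le_measure; rewrite ?inE //= => x abx; apply: fN => /(_ abx).
move: abx; rewrite /= in_itv /= => /andP[ax xb] /eqP.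
by rewrite eqe gt_eqF ?f_gt0.
Qed.

Lemma Rintegral_itv0_ge0 f y : (forall x, 0 <= x -> 0 <= f x) ->
  0 <= \int[mu]_(x in `[0, y]) f x.
Proof.
by move=> f_ge0; apply: Rintegral_ge0 => x; rewrite /= in_itv /= => /andP[/f_ge0].
Qed.

Lemma Rintegral_itv0_lt f a b : measurable_fun (`[0, +oo[ : set R) f ->
  locally_bounded_on_nonneg f -> (forall x, a < x -> x <= b -> 0 < f x) ->
  0 <= a -> a < b -> \int[mu]_(x in `[0, a]) f x < \int[mu]_(x in `[0, b]) f x.
Proof.
move=> mf bf f_gt0 a0 ab; rewrite -subr_gt0.
have fi := integrable_itv0 b mf bf.
rewrite (@Rintegral_itvB _ _ (BLeft 0) (BRight b)) ?bnd_simp ?(ltW ab) //.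
apply: Rintegral_itv_gt0 => //; apply: integrableS fi => //.
by apply: subset_itvr; rewrite bnd_simp.
Qed.

End PrimitiveOfPositive.

Section ApexHull.
Context {R : realType}.
Implicit Types (a b c t : R) (A B C E p q : R * R) (S T : set (R * R)).

Definition affine_form a b c q : R := a * q.1 + b * q.2 + c.

Definition apex_hull A S : set (R * R) :=
  [set p | exists B C E, [/\ S B, S C, S E & conv4 A B C E p]].

Lemma conv3_conv4 A B C p : conv3 A B C p -> conv4 A B C C p.
Proof.
case=> l1 [l2 [l3 [l10 l20 l30 l1s ->]]]; exists l1, l2, l3, 0.
by split; [split; rewrite ?addr0 | rewrite !mul0r !addr0].
Qed.

Lemma apex_hull_sub A S T : S `<=` T -> apex_hull A S `<=` apex_hull A T.
Proof.
by move=> ST p [B [C [E [SB SC SE hp]]]]; exists B, C, E; split=> //; apply: ST.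
Qed.

Lemma conv4_affine_form A B C E p : conv4 A B C E p ->
  exists l1 l2 l3 l4, [/\ 0 <= l1, 0 <= l2, 0 <= l3, 0 <= l4 &
    forall a b c, affine_form a b c p = l1 * affine_form a b c A +
      l2 * affine_form a b c B + l3 * affine_form a b c C + l4 * affine_form a b c E].
Proof.
case=> l1 [l2 [l3 [l4 [[l10 l20 l30 l40 l1s] ->]]]].
exists l1, l2, l3, l4; split => // a b c.
have -> : l4 = 1 - l1 - l2 - l3 by lra.
by rewrite /affine_form /=; ring.
Qed.

Lemma apex_hull_affine_ge0 a b c A S p :
  0 <= affine_form a b c A -> (forall q, S q -> 0 <= affine_form a b c q) ->
  apex_hull A S p -> 0 <= affine_form a b c p.
Proof.
move=> hA hS [B [C [E [SB SC SE]]]].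
move=> /conv4_affine_form[l1 [l2 [l3 [l4 [l10 l20 l30 l40 ->]]]]].
have := mulr_ge0 l10 hA; have := mulr_ge0 l20 (hS _ SB).
have := mulr_ge0 l30 (hS _ SC); have := mulr_ge0 l40 (hS _ SE); lra.
Qed.

(* Such a point p carries no weight on the apex A. *)
Lemma apex_hull_affine_base a b c a' b' c' A S p : apex_hull A S p ->
  affine_form a b c A < 0 -> (forall q, S q -> affine_form a b c q <= 0) ->
  0 <= affine_form a b c p -> (forall q, S q -> affine_form a' b' c' q = 0) ->
  affine_form a' b' c' p = 0.
Proof.
move=> [B [C [E [SB SC SE]]]].
move=> /conv4_affine_form[l1 [l2 [l3 [l4 [l10 l20 l30 l40 phiE]]]]] hA hS hp hS'.
have l1_0 : l1 = 0.
  move: hp; rewrite phiE.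
  have := mulr_ge0_le0 l20 (hS _ SB); have := mulr_ge0_le0 l30 (hS _ SC).
  have := mulr_ge0_le0 l40 (hS _ SE); nra.
by rewrite phiE l1_0 (hS' _ SB) (hS' _ SC) (hS' _ SE) !mulr0 mul0r !addr0.
Qed.

Arguments apex_hull_affine_base a b c a' b' c' {A S p}.

Lemma apex_hulls_meet_on_xaxis t h x1 x2 p : 0 < t -> 0 <= h ->
  0 < x1 -> x1 < x2 ->
  apex_hull (x1, t) [set q | q.2 = 0 /\ q.1 <= h \/ q.1 = 0 /\ 0 <= q.2 <= t] p ->
  apex_hull (x2, t) [set q | q.2 = 0 /\ h <= q.1] p -> p.2 = 0.
Proof.
move=> t0 h0 x10 x12 hull1 hull2; pose b := (x1 + x2) / 2.
have [x1b bx2] : x1 < b /\ b < x2 by split; rewrite /b; lra.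
(* the line through (h, 0) and (b, t) *)
have := apex_hull_affine_base (- t) (b - h) (t * h) 0 1 0 hull2.
rewrite /affine_form /= !mul0r mul1r !addr0 add0r; apply.
- by rewrite /=; nra.
- by case=> q1 q2 /= [-> hq1]; nra.
- apply: apex_hull_affine_ge0 hull1; rewrite /affine_form /=; first by nra.
  by case=> q1 q2 /= [[-> hq1]|[-> /andP[q20 q2t]]]; nra.
- by move=> q [-> _]; rewrite mulr0 mul0r !addr0.
Qed.

Lemma apex_hulls_meet_on_yaxis t c x1 x2 p : c < t -> 0 < x1 -> x1 < x2 ->
  apex_hull (x1, t) [set q | q.1 = 0 /\ c <= q.2] p ->
  apex_hull (x2, t) [set q | 0 <= q.1 /\ q.2 <= c] p -> p.1 = 0.
Proof.
move=> ct x10 x12 hull1 hull2; pose b := (x1 + x2) / 2.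
have [x1b bx2] : x1 < b /\ b < x2 by split; rewrite /b; lra.
(* the line through (0, c) and (b, t) *)
have := apex_hull_affine_base (t - c) (- b) (b * c) 1 0 0 hull1.
rewrite /affine_form /= !mul0r mul1r !addr0; apply.
- by rewrite /=; nra.
- by case=> q1 q2 /= [-> hq2]; nra.
- apply: apex_hull_affine_ge0 hull2; rewrite /affine_form /=; first by nra.
  by case=> q1 q2 /= [q10 q2c]; nra.
- by move=> q [-> _]; rewrite mulr0 mul0r !addr0.
Qed.

End ApexHull.

Section ExtremeMinimizers.
Context {R : realType}.

Lemma inf_minimum (E : set R) m : E m -> lbound E m -> inf E = m.
Proof.
move=> Em mE; apply/eqP; rewrite eq_le lb_le_inf ?andbT //; last by exists m.
by apply: ge_inf => //; exists m.
Qed.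

Lemma sup_maximum (E : set R) m : E m -> ubound E m -> sup E = m.
Proof.
move=> Em mE; apply/eqP; rewrite eq_le ge_sup //=; last by exists m.
by apply: ub_le_sup => //; exists m.
Qed.

Variable f : R -> R.
Hypothesis hf : has_extreme_minimizers f.
Local Notation fmin := (inf [set f y | y in `[0, +oo[]).
Local Notation argmin := [set y | 0 <= y /\ f y = fmin].

Lemma extreme_minimizersP : [/\ forall y, 0 <= y -> fmin <= f y,
  argmin (inf argmin), argmin (sup argmin) &
  forall y, argmin y -> inf argmin <= y <= sup argmin].
Proof.
have [ylo [yhi [ylo0 yhi0 fylo fyhi ylo_yhi]]] := hf.
have fminE : fmin = f ylo.
  apply: inf_minimum; first by exists ylo; rewrite //= in_itv /= ylo0.
  by move=> z [y]; rewrite /= in_itv /= andbT => /fylo ? <-.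
have argminE y : argmin y <-> 0 <= y /\ f y = f ylo by rewrite fminE.
have infE : inf argmin = ylo.
  by apply: inf_minimum => [|y /argminE[y0 /(ylo_yhi y y0)[]]]; rewrite ?argminE.
have supE : sup argmin = yhi.
  by apply: sup_maximum => [|y /argminE[y0 /(ylo_yhi y y0)[]]]; rewrite ?argminE.
by rewrite infE supE fminE; split=> // y [y0 /(ylo_yhi y y0)[-> ->]].
Qed.

End ExtremeMinimizers.

Section CharacteristicTriangles.
Context {R : realType} (u0 ub rho0 rhob : R -> R).
Hypotheses (mu0 : measurable_fun (`[0, +oo[ : set R) u0)
  (mub : measurable_fun (`[0, +oo[ : set R) ub)
  (mrho0 : measurable_fun (`[0, +oo[ : set R) rho0)
  (mrhob : measurable_fun (`[0, +oo[ : set R) rhob)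
  (bu0 : bounded_on_nonneg u0) (bub : bounded_on_nonneg ub)
  (ub_gt0 : forall eta, 0 <= eta -> 0 < ub eta)
  (rho0_gt0 : forall eta, 0 <= eta -> 0 < rho0 eta)
  (rhob_gt0 : forall eta, 0 <= eta -> 0 < rhob eta)
  (lbrho0 : locally_bounded_on_nonneg rho0)
  (lbrhob : locally_bounded_on_nonneg rhob).
Variable t : R.
Hypothesis t_gt0 : 0 < t.
Hypotheses
  (minF : forall x, 0 <= x -> has_extreme_minimizers (fun y => Fyxt u0 rho0 y x t))
  (minG : forall x, 0 <= x -> has_extreme_minimizers (fun tau => Gtxt ub rhob tau x t)).

Notation mu := (@lebesgue_measure R).
Local Notation F y x := (Fyxt u0 rho0 y x t).
Local Notation G tau x := (Gtxt ub rhob tau x t).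
Local Notation Fm x := (Fmin u0 rho0 x t).
Local Notation Gm x := (Gmin ub rhob x t).
Local Notation argF x := (argminF u0 rho0 x t).
Local Notation argG x := (argminG ub rhob x t).

Definition mass0 y := \int[mu]_(eta in `[0, y]) rho0 eta.
Definition massb y := \int[mu]_(eta in `[0, y]) (rhob eta * ub eta).

Let lbub : locally_bounded_on_nonneg ub := bounded_locally_bounded bub.

Let rhob_ub_gt0 eta : 0 <= eta -> 0 < rhob eta * ub eta.
Proof. by move=> eta0; rewrite mulr_gt0 ?rhob_gt0 ?ub_gt0. Qed.

Let measurable_rhob_ub :
  measurable_fun (`[0, +oo[ : set R) (fun eta => rhob eta * ub eta).
Proof. exact: measurable_funM. Qed.

Let locally_bounded_rhob_ub :
  locally_bounded_on_nonneg (fun eta => rhob eta * ub eta).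
Proof. exact: locally_boundedM lbrhob lbub. Qed.

Let measurable_Gint x : measurable_fun (`[0, +oo[ : set R)
  (fun eta => (x - ub eta * (t - eta)) * rhob eta * ub eta).
Proof.
apply: measurable_funM => //; apply: measurable_funM => //.
apply: measurable_funB => //; apply: measurable_funM => //.
exact: measurable_funB.
Qed.

Let locally_bounded_Gint x :
  locally_bounded_on_nonneg (fun eta => (x - ub eta * (t - eta)) * rhob eta * ub eta).
Proof.
apply: (locally_boundedM (locally_boundedM _ lbrhob) lbub).
apply: locally_boundedD; first exact: locally_bounded_cst.
apply/locally_boundedN/(locally_boundedM lbub).
apply: locally_boundedD; first exact: locally_bounded_cst.
exact/locally_boundedN/locally_bounded_id.
Qed.

Let integrable_Fint x y : mu.-integrable `[0, y]
  (EFin \o (fun eta => (t * u0 eta + eta - x) * rho0 eta)).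
Proof.
apply: integrable_itv0.
  apply: measurable_funM => //; apply: measurable_funB => //.
  by apply: measurable_funD => //; exact: measurable_funM.
apply: locally_boundedM => //; apply: locally_boundedD; last exact: locally_bounded_cst.
apply: locally_boundedD; last exact: locally_bounded_id.
exact: locally_boundedM (locally_bounded_cst _) (bounded_locally_bounded bu0).
Qed.

Lemma Fyxt_shift y x1 x2 : F y x2 = F y x1 - (x2 - x1) * mass0 y.
Proof.
rewrite /Fyxt /mass0 -(RintegralZl (x2 - x1) _ (integrable_itv0 y mrho0 lbrho0)) //.
rewrite -(RintegralB _ (integrable_Fint x1 y)) //.
  by apply: eq_Rintegral => eta _; ring.
apply: integrable_itv0; first exact: measurable_funM.
exact: locally_boundedM (locally_bounded_cst _) lbrho0.
Qed.

Lemma Gtxt_shift tau x1 x2 : G tau x2 = G tau x1 + (x2 - x1) * massb tau.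
Proof.
have rhob_ub_int := integrable_itv0 tau measurable_rhob_ub locally_bounded_rhob_ub.
rewrite /Gtxt /massb -(RintegralZl (x2 - x1) _ rhob_ub_int) //.
rewrite -RintegralD //; first by apply: eq_Rintegral => eta _; ring.
  exact: integrable_itv0 (measurable_Gint x1) (locally_bounded_Gint x1).
apply: integrable_itv0; first exact: measurable_funM.
exact: locally_boundedM (locally_bounded_cst _) locally_bounded_rhob_ub.
Qed.

Lemma mass0_ge0 y : 0 <= mass0 y.
Proof. by apply: Rintegral_itv0_ge0 => eta /rho0_gt0/ltW. Qed.

Lemma massb_ge0 y : 0 <= massb y.
Proof. by apply: Rintegral_itv0_ge0 => eta /rhob_ub_gt0/ltW. Qed.

Lemma mass0_lt a b : 0 <= a -> a < b -> mass0 a < mass0 b.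
Proof.
move=> a0 ab; apply: Rintegral_itv0_lt => // eta a_eta _.
by apply: rho0_gt0; exact: le_trans (ltW a_eta).
Qed.

Lemma massb_lt a b : 0 <= a -> a < b -> massb a < massb b.
Proof.
move=> a0 ab.
apply: (Rintegral_itv0_lt measurable_rhob_ub locally_bounded_rhob_ub) => // eta a_eta _.
by apply: rhob_ub_gt0; exact: le_trans (ltW a_eta).
Qed.

Lemma Fmin_le x y : 0 <= x -> 0 <= y -> Fm x <= F y x.
Proof.
by move=> x0; have [Fm_le _ _ _] := extreme_minimizersP (minF x0); apply: Fm_le.
Qed.

Lemma Gmin_le x tau : 0 <= x -> 0 <= tau -> Gm x <= G tau x.
Proof.
by move=> x0; have [Gm_le _ _ _] := extreme_minimizersP (minG x0); apply: Gm_le.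
Qed.

Lemma y_low_argmin x : 0 <= x -> argF x (y_low u0 rho0 x t).
Proof. by move=> x0; have [_ ? _ _] := extreme_minimizersP (minF x0). Qed.

Lemma y_up_argmin x : 0 <= x -> argF x (y_up u0 rho0 x t).
Proof. by move=> x0; have [_ _ ? _] := extreme_minimizersP (minF x0). Qed.

Lemma tau_low_argmin x : 0 <= x -> argG x (tau_low ub rhob x t).
Proof. by move=> x0; have [_ ? _ _] := extreme_minimizersP (minG x0). Qed.

Lemma tau_up_argmin x : 0 <= x -> argG x (tau_up ub rhob x t).
Proof. by move=> x0; have [_ _ ? _] := extreme_minimizersP (minG x0). Qed.

Lemma argminF_le_y_up x y : 0 <= x -> argF x y -> y <= y_up u0 rho0 x t.
Proof.
move=> x0; have [_ _ _ bounds] := extreme_minimizersP (minF x0).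
by move=> /bounds/andP[].
Qed.

Lemma tau_low_le_argminG x tau : 0 <= x -> argG x tau -> tau_low ub rhob x t <= tau.
Proof.
move=> x0; have [_ _ _ bounds] := extreme_minimizersP (minG x0).
by move=> /bounds/andP[].
Qed.

Lemma argminF_mono x1 x2 y1 y2 : 0 <= x1 -> x1 < x2 ->
  argF x1 y1 -> argF x2 y2 -> y1 <= y2.
Proof.
move=> x10 x12 [y10 Fy1] [y20 Fy2]; have x20 := le_trans x10 (ltW x12).
have := Fmin_le x10 y20; have := Fmin_le x20 y10.
rewrite -Fy1 -Fy2 (Fyxt_shift y1 x1 x2) (Fyxt_shift y2 x1 x2) => le2 le1.
rewrite leNgt; apply/negP => /(mass0_lt y20).
by rewrite -(ltr_pM2l (_ : 0 < x2 - x1)) ?subr_gt0 //; lra.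
Qed.

Lemma argminG_mono x1 x2 tau1 tau2 : 0 <= x1 -> x1 < x2 ->
  argG x1 tau1 -> argG x2 tau2 -> tau2 <= tau1.
Proof.
move=> x10 x12 [tau10 Gtau1] [tau20 Gtau2]; have x20 := le_trans x10 (ltW x12).
have := Gmin_le x10 tau20; have := Gmin_le x20 tau10.
rewrite -Gtau1 -Gtau2 (Gtxt_shift tau1 x1 x2) (Gtxt_shift tau2 x1 x2) => le2 le1.
rewrite leNgt; apply/negP => /(massb_lt tau10).
by rewrite -(ltr_pM2l (_ : 0 < x2 - x1)) ?subr_gt0 //; lra.
Qed.

Lemma Fmin_nonincreasing x1 x2 : 0 <= x1 -> x1 <= x2 -> Fm x2 <= Fm x1.
Proof.
move=> x10 x12; have [y0 Fy] := y_low_argmin x10.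
rewrite -Fy (le_trans (Fmin_le (le_trans x10 x12) y0)) // (Fyxt_shift _ x1).
by rewrite lerBlDr lerDl mulr_ge0 ?subr_ge0 ?mass0_ge0.
Qed.

Lemma Gmin_nondecreasing x1 x2 : 0 <= x1 -> x1 <= x2 -> Gm x1 <= Gm x2.
Proof.
move=> x10 x12; have [tau0 Gtau] := tau_low_argmin (le_trans x10 x12).
rewrite -Gtau (le_trans (Gmin_le x10 tau0)) // (Gtxt_shift _ x1 x2).
by rewrite lerDl mulr_ge0 ?subr_ge0 ?massb_ge0.
Qed.

Lemma argminF_eq0 x1 x2 y : 0 <= x1 -> x1 < x2 -> Fm x1 <= Fm x2 ->
  argF x1 y -> y = 0.
Proof.
move=> x10 x12 Fm12 [y0 Fy]; have := Fmin_le (le_trans x10 (ltW x12)) y0.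
rewrite (Fyxt_shift _ x1) Fy => Fm2_le.
apply/eqP; rewrite eq_le y0 andbT leNgt.
apply/negP => /(mass0_lt (lexx 0)) M0y.
have : 0 < (x2 - x1) * mass0 y.
  by rewrite mulr_gt0 ?subr_gt0 // (le_lt_trans (mass0_ge0 0)).
lra.
Qed.

Lemma argminG_eq0 x1 x2 tau : 0 <= x1 -> x1 < x2 -> Gm x2 <= Gm x1 ->
  argG x2 tau -> tau = 0.
Proof.
move=> x10 x12 Gm21 [tau0 Gtau]; have Gm1_le := Gmin_le x10 tau0.
have := Gtxt_shift tau x1 x2; rewrite Gtau => Gshift.
apply/eqP; rewrite eq_le tau0 andbT leNgt.
apply/negP => /(massb_lt (lexx 0)) N0tau.
have : 0 < (x2 - x1) * massb tau.
  by rewrite mulr_gt0 ?subr_gt0 // (le_lt_trans (massb_ge0 0)).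
lra.
Qed.

Lemma argminG_lt_t x tau : 0 < x -> argG x tau -> tau < t.
Proof.
move=> x0 [tau0 Gtau]; rewrite ltNge; apply/negP => t_le_tau.
have [C ubC] := bub.
have C0 : 0 < C.
  exact: lt_le_trans (ub_gt0 (lexx 0)) (le_trans (ler_norm _) (ubC _ (lexx 0))).
(* on ]a, tau], ub eta * (t - eta) <= x / 2, so the integrand of G is > 0 *)
pose a := Num.max 0 (t - x / (2 * C)).
have a0 : 0 <= a by rewrite le_max lexx.
have a_ge : t - x / (2 * C) <= a by rewrite le_max lexx orbT.
have a_lt_t : a < t by rewrite gt_max t_gt0 ltrBlDr ltrDl divr_gt0 ?mulr_gt0.
suff : G a x < G tau x by rewrite Gtau ltNge (Gmin_le (ltW x0) a0).
apply: (Rintegral_itv0_lt (measurable_Gint x) (locally_bounded_Gint x)) => //;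
  last exact: lt_le_trans t_le_tau.
move=> eta a_eta _; have eta0 := le_trans a0 (ltW a_eta).
rewrite !mulr_gt0 ?rhob_gt0 ?ub_gt0 // subr_gt0.
have [t_le_eta|eta_lt_t] := lerP t eta.
  by rewrite (le_lt_trans _ x0) // mulr_ge0_le0 ?subr_le0 // ltW ?ub_gt0.
have : ub eta * (t - eta) <= C * (x / (2 * C)).
  rewrite ler_pM ?subr_ge0 ?(ltW eta_lt_t) ?(ltW (ub_gt0 eta0)) //.
    exact: le_trans (ler_norm _) (ubC _ eta0).
  lra.
have -> : C * (x / (2 * C)) = x / 2 by field; rewrite gt_eqF.
lra.
Qed.

Definition Fbase x : set (R * R) := [set (y, 0) | y in argF x].
Definition Gbase x : set (R * R) := [set (0, tau) | tau in argG x].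
Definition char_base x := Fbase x `|` Gbase x `|` [set (0, 0)].

Lemma char_triangle_Fhull x : 0 < x -> Fm x < Gm x ->
  char_triangle u0 ub rho0 rhob x t `<=` apex_hull (x, t) (Fbase x).
Proof.
rewrite /char_triangle => x0 FG; rewrite x0 FG /= => p /conv3_conv4 hp.
exists (y_low u0 rho0 x t, 0), (y_up u0 rho0 x t, 0), (y_up u0 rho0 x t, 0).
by split=> //; apply: imageP;
  [apply: y_low_argmin | apply: y_up_argmin..]; exact: ltW.
Qed.

Lemma char_triangle_Ghull x : 0 < x -> Gm x < Fm x ->
  char_triangle u0 ub rho0 rhob x t `<=` apex_hull (x, t) (Gbase x).
Proof.
rewrite /char_triangle => x0 GF; rewrite GF (lt_gtF GF) andbF /= => p /conv3_conv4 hp.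
exists (0, tau_low ub rhob x t), (0, tau_up ub rhob x t).
exists (0, tau_up ub rhob x t).
by split=> //; apply: imageP;
  [apply: tau_low_argmin | apply: tau_up_argmin..]; exact: ltW.
Qed.

Lemma char_triangle_hull x : 0 < x ->
  char_triangle u0 ub rho0 rhob x t `<=` apex_hull (x, t) (char_base x).
Proof.
move=> x0; case: (ltgtP (Fm x) (Gm x)) => [FG|GF|FG].
- by move=> p /(char_triangle_Fhull x0 FG); apply: apex_hull_sub => q Fq; left; left.
- by move=> p /(char_triangle_Ghull x0 GF); apply: apex_hull_sub => q Gq; left; right.
rewrite /char_triangle FG ltxx eqxx andbF /= => p hp.
exists (y_up u0 rho0 x t, 0), (0, tau_up ub rhob x t), (0, 0).
split=> //; [left; left | left; right | by right]; apply: imageP.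
  exact/y_up_argmin/ltW.
exact/tau_up_argmin/ltW.
Qed.

Lemma char_triangles_sep_F x1 x2 p : 0 < x1 -> x1 < x2 -> Fm x2 < Gm x2 ->
  char_triangle u0 ub rho0 rhob x1 t p -> char_triangle u0 ub rho0 rhob x2 t p ->
  p.2 = 0.
Proof.
move=> x10 x12 FG2 T1 T2; have yup := y_up_argmin (ltW x10).
apply: (apex_hulls_meet_on_xaxis t_gt0 (proj1 yup) x10 x12).
- apply: apex_hull_sub (char_triangle_hull x10 T1).
  move=> _ [[[y Fy <-]|[tau Gtau <-]]|->] /=.
  + by left; split=> //; exact: argminF_le_y_up (ltW x10) Fy.
  + by right; rewrite (proj1 Gtau) ltW ?(argminG_lt_t x10 Gtau).
  + by right; rewrite lexx ltW.
- apply: apex_hull_sub (char_triangle_Fhull (lt_trans x10 x12) FG2 T2).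
  by move=> _ [y Fy <-]; split=> //; exact: argminF_mono (ltW x10) x12 yup Fy.
Qed.

Lemma char_triangles_sep_G x1 x2 p : 0 < x1 -> x1 < x2 -> Gm x1 < Fm x1 ->
  char_triangle u0 ub rho0 rhob x1 t p -> char_triangle u0 ub rho0 rhob x2 t p ->
  p.1 = 0.
Proof.
move=> x10 x12 GF1 T1 T2; have tlow := tau_low_argmin (ltW x10).
apply: (apex_hulls_meet_on_yaxis (argminG_lt_t x10 tlow) x10 x12).
- apply: apex_hull_sub (char_triangle_Ghull x10 GF1 T1).
  by move=> _ [tau Gtau <-]; split=> //; exact: tau_low_le_argminG (ltW x10) Gtau.
- apply: apex_hull_sub (char_triangle_hull (lt_trans x10 x12) T2).
  move=> _ [[[y [y0 _] <-]|[tau Gtau <-]]|->] /=; split=> //; try exact: (proj1 tlow).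
  exact: argminG_mono (ltW x10) x12 tlow Gtau.
Qed.

Lemma char_triangles_sep_E x1 x2 p : 0 < x1 -> x1 < x2 ->
  Fm x1 <= Fm x2 -> Gm x2 <= Gm x1 ->
  char_triangle u0 ub rho0 rhob x1 t p -> char_triangle u0 ub rho0 rhob x2 t p ->
  p.1 = 0.
Proof.
move=> x10 x12 Fm12 Gm21 T1 T2.
apply: (apex_hulls_meet_on_yaxis t_gt0 x10 x12).
- apply: apex_hull_sub (char_triangle_hull x10 T1).
  move=> _ [[[y Fy <-]|[tau [tau0 _] <-]]|->] //=.
  by rewrite (argminF_eq0 (ltW x10) x12 Fm12 Fy).
- apply: apex_hull_sub (char_triangle_hull (lt_trans x10 x12) T2).
  move=> _ [[[y [y0 _] <-]|[tau Gtau <-]]|->] //=.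
  by rewrite (argminG_eq0 (ltW x10) x12 Gm21 Gtau).
Qed.

Lemma char_triangles_disjoint x1 x2 p : 0 < x1 -> x1 < x2 -> 0 < p.1 -> 0 < p.2 ->
  char_triangle u0 ub rho0 rhob x1 t p -> char_triangle u0 ub rho0 rhob x2 t p ->
  False.
Proof.
move=> x10 x12 p1 p2 T1 T2.
have Fm21 := Fmin_nonincreasing (ltW x10) (ltW x12).
have Gm12 := Gmin_nondecreasing (ltW x10) (ltW x12).
have [FG2|GF2] := ltP (Fm x2) (Gm x2).
  by move: p2; rewrite (char_triangles_sep_F x10 x12 FG2 T1 T2) ltxx.
have [GF1|FG1] := ltP (Gm x1) (Fm x1).
  by move: p1; rewrite (char_triangles_sep_G x10 x12 GF1 T1 T2) ltxx.
have Fm12 : Fm x1 <= Fm x2 by lra.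
have Gm21 : Gm x2 <= Gm x1 by lra.
by move: p1; rewrite (char_triangles_sep_E x10 x12 Fm12 Gm21 T1 T2) ltxx.
Qed.

End CharacteristicTriangles.

Theorem lemma2p9 (R : realType) (u0 ub rho0 rhob : R -> R)
  (mu0 : measurable_fun (`[0%R, +oo[ : set R) u0) (mub : measurable_fun (`[0%R, +oo[ : set R) ub)
  (mrho0 : measurable_fun (`[0%R, +oo[ : set R) rho0) (mrhob : measurable_fun (`[0%R, +oo[ : set R) rhob)
  (bu0 : bounded_on_nonneg u0) (bub : bounded_on_nonneg ub)
  (ub_pos : forall eta, 0 <= eta -> 0 < ub eta)
  (rho0_pos : forall eta, 0 <= eta -> 0 < rho0 eta)
  (rhob_pos : forall eta, 0 <= eta -> 0 < rhob eta)
  (lbrho0 : locally_bounded_on_nonneg rho0) (lbrhob : locally_bounded_on_nonneg rhob)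
  (minF : forall x t : R, 0 <= x -> 0 < t ->
     has_extreme_minimizers (fun y => Fyxt u0 rho0 y x t))
  (minG : forall x t : R, 0 <= x -> 0 < t ->
     has_extreme_minimizers (fun tau => Gtxt ub rhob tau x t))
  (t x1 x2 : R) (ht : 0 < t) (hx1 : 0 < x1) (hx2 : 0 < x2) (hx12 : x1 != x2) :
  ~ (exists p : R * R, [/\ 0 < p.1, 0 < p.2,
       char_triangle u0 ub rho0 rhob x1 t p & char_triangle u0 ub rho0 rhob x2 t p]).
Proof.
move=> [p [p1 p2 T1 T2]].
have disjoint := char_triangles_disjoint mu0 mub mrho0 mrhob bu0 bub ub_pos
  rho0_pos rhob_pos lbrho0 lbrhob ht (fun x x0 => minF x t x0 ht)
  (fun x x0 => minG x t x0 ht).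
have [x12|x21] : x1 < x2 \/ x2 < x1 by apply/orP; rewrite -neq_lt.
- exact: disjoint hx1 x12 p1 p2 T1 T2.
- exact: disjoint hx2 x21 p1 p2 T2 T1.
Qed.
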